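(* Let $k\ge 1$ and $m\ge 0$ be integers. Let $K$ be the set of all odd integers in the closed interval $[1,6k-1]$, and let $$T=\bigcup_{j=0}^{m}5^jK,\qquad\text{where } cU=\{cu:\ u\in U\}.$$ Then $|T|=3k(m+1)-m\lfloor(3k+2)/5\rfloor$. *)

From mathcomp Require Import all_boot all_order.
From mathcomp Require Import finmap.
Set Implicit Arguments. Unset Strict Implicit. Unset Printing Implicit Defensive.
Local Open Scope fset_scope.

Definition Kset (k : nat) : {fset nat} :=
  [fset x | x in iota 1 (6 * k - 1) & odd x].

Definition scale_fset (c : nat) (U : {fset nat}) : {fset nat} :=
  [fset c * u | u in U].

Definition Tset (k m : nat) : {fset nat} :=
  (\bigcup_(j <- iota 0 m.+1) scale_fset (5 ^ j) (Kset k))%fset.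

From mathcomp Require Import all_boot all_order.
From mathcomp Require Import finmap.
From mathcomp Require Import zify.
Local Open Scope fset_scope.

(* Adding the layer [5^(m+1) K] to [T k m] adds [3k] elements, of which
   exactly those of the form [5^(m+1) v] with [v] odd and [5 v <= 6k - 1]
   were already present (as [5^m (5 v)]): an element [5^j u] with [j <= m]
   and [u] odd can only equal [5^(m+1) v] if [u = 5^(m+1-j) v >= 5 v].
   There are [(3k+2)/5] such [v], which gives the recurrence. *)

Definition odd_fset (n : nat) : {fset nat} := [fset y | y in iota 1 n & odd y].

Lemma Kset_odd_fset k : Kset k = odd_fset (6 * k - 1).
Proof. by []. Qed.

Lemma mem_odd_fset n x : (x \in odd_fset n) = odd x && (0 < x <= n).
Proof.
rewrite inE /= unfold_in /=.
have -> : (x \in [eta mem_seq (iota 1 n)]) = (x \in iota 1 n) by [].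
by rewrite mem_iota add1n ltnS andbC.
Qed.

Lemma count_odd_iota1 n : count odd (iota 1 n) = n.+1 %/ 2.
Proof.
elim: n => [//|n IHn].
rewrite -(addn1 n) iotaD count_cat IHn /= addn0.
have := odd_double_half n; rewrite -!divn2 -muln2.
by case: (odd n) => /=; lia.
Qed.

Lemma card_odd_fset n : #|` odd_fset n| = n.+1 %/ 2.
Proof.
by rewrite card_imfset //= undup_id ?iota_uniq // size_filter count_odd_iota1.
Qed.

Lemma card_Kset k : #|` Kset k| = 3 * k.
Proof. rewrite Kset_odd_fset card_odd_fset; lia. Qed.

Lemma mem_scale_fset c U x :
  reflect (exists2 u, u \in U & x = c * u) (x \in scale_fset c U).
Proof. exact: imfsetP. Qed.

Lemma card_scale_fset c U : 0 < c -> #|` scale_fset c U| = #|` U|.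
Proof.
move=> c_gt0; apply/eqP/card_in_imfsetP => x y _ _ /eqP.
by rewrite eqn_pmul2l // => /eqP.
Qed.

Lemma mem_Tset k m x :
  reflect (exists j, exists2 u, (j <= m) && (u \in Kset k) & x = 5 ^ j * u)
          (x \in Tset k m).
Proof.
rewrite /Tset; apply: (iffP (bigfcupP _ _ _ _)).
  move=> [j]; rewrite andbT mem_iota add0n ltnS /= => le_jm /mem_scale_fset[u Ku ->].
  by exists j, u; rewrite ?le_jm.
move=> [j [u /andP[le_jm Ku] ->]]; exists j.
  by rewrite andbT mem_iota add0n ltnS.
by apply/mem_scale_fset; exists u.
Qed.

Lemma TsetS k m : Tset k m.+1 = Tset k m `|` scale_fset (5 ^ m.+1) (Kset k).
Proof. by rewrite /Tset -(addn1 m.+1) iotaD big_cat /= big_seq1. Qed.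

Lemma scale_pow_eq_le j n u v :
  j < n -> 5 ^ j * u = 5 ^ n * v -> v * 5 <= u.
Proof.
move=> lt_jn; rewrite -(subnKC (ltnW lt_jn)) expnD -mulnA.
move/eqP; rewrite eqn_pmul2l ?expn_gt0 // => /eqP ->.
rewrite mulnC leq_mul2r; apply/orP; right.
by rewrite -{1}(expn1 5) leq_pexp2l // subn_gt0.
Qed.

Lemma Tset_capS k m :
  Tset k m `&` scale_fset (5 ^ m.+1) (Kset k) =
  scale_fset (5 ^ m.+1) (odd_fset ((6 * k - 1) %/ 5)).
Proof.
apply/fsetP => x; rewrite inE; apply/andP/idP.
  move=> [/mem_Tset[j [u /andP[le_jm Ku] ->]] /mem_scale_fset[v Kv eq_uv]].
  apply/mem_scale_fset; exists v => //.
  move: Ku Kv; rewrite !Kset_odd_fset !mem_odd_fset.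
  move=> /and3P[_ _ le_u] /and3P[odd_v v_gt0 _].
  rewrite odd_v v_gt0 leq_divRL //.
  by apply: leq_trans le_u; apply: scale_pow_eq_le eq_uv; rewrite ltnS.
move=> /mem_scale_fset[v]; rewrite mem_odd_fset leq_divRL //.
move=> /and3P[odd_v v_gt0 le_v] ->; split.
  apply/mem_Tset; exists m, (5 * v).
    by rewrite leqnn Kset_odd_fset mem_odd_fset oddM odd_v /=; lia.
  by rewrite expnS mulnCA mulnA.
by apply/mem_scale_fset; exists v; rewrite // Kset_odd_fset mem_odd_fset odd_v v_gt0 /=; lia.
Qed.

Lemma card_TsetS k m :
  #|` Tset k m.+1| = #|` Tset k m| + 3 * k - (3 * k + 2) %/ 5.
Proof.
rewrite TsetS cardfsU Tset_capS !card_scale_fset ?expn_gt0 //.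
by rewrite card_Kset card_odd_fset; congr (_ - _); lia.
Qed.

Theorem lemma2p3 (k m : nat) : 1 <= k ->
  #|` Tset k m| = 3 * k * (m + 1) - m * ((3 * k + 2) %/ 5).
Proof.
move=> _; have le_q : (3 * k + 2) %/ 5 <= 3 * k by lia.
elim: m => [|m IHm].
  by rewrite /Tset /= big_seq1 card_scale_fset // card_Kset; lia.
rewrite card_TsetS IHm; nia.
Qed.
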